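(* Let $\mathcal G=(G_n)_{n\in\mathbb N}=((V_n,E_n))_{n\in\mathbb N}$ be an expander sequence. Let $\varepsilon>0$ and let $(\tilde G_n)$ be such that each $\tilde G_n$ is obtained from $G_n$ by deleting edges such that each vertex keeps at least a $(1/2+\varepsilon)$ fraction of its edges. Let $A_n\subseteq V_n$ with $|A_n|=o(n)$. (a) There is $B_n\subseteq A_n$ with $|B_n|=(1-o(1))|A_n|$ such that for all $u\in B_n$, $\frac{|N_{\tilde G_n}(u)\cap A_n|}{|N_{\tilde G_n}(u)|}=o(1)$. (b) There is $B_n\subseteq V_n\setminus A_n$ with $|V_n\setminus(A_n\cup B_n)|=o(|A_n|)$ such that for all $v\in B_n$, $\frac{|N_{\tilde G_n}(v)\cap A_n|}{|N_{\tilde G_n}(v)|}=o(1)$.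
   Context: An expander sequence is a sequence $(G_n)$ of connected graphs, $G_n$ on $n$ vertices with minimum degree $\delta_n$, maximum degree $\Delta_n$, and $\lambda_n=\max\{|\mu_2|,|\mu_n|\}$ (adjacency eigenvalues $\mu_1\ge\dots\ge\mu_n$), such that $\Delta_n/\delta_n=1+o(1)$ and $\lambda_n=o(\Delta_n)$. ''Keeps at least a $(1/2+\varepsilon)$ fraction'' means $d_{\tilde G_n}(v)\ge(1/2+\varepsilon)d_{G_n}(v)$. $N_{\tilde G_n}(u)$ is the neighbourhood of $u$ in $\tilde G_n$. Asymptotic notation is as $n\to\infty$; the $o(1)$ bounds on the ratios hold uniformly over the vertices of $B_n$. *)

From HB Require Import structures.
From mathcomp Require Import all_boot all_order all_algebra.
From mathcomp Require Import reals.
Set Implicit Arguments. Unset Strict Implicit. Unset Printing Implicit Defensive.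
Import Order.TTheory GRing.Theory Num.Theory.
Local Open Scope ring_scope.

Definition simple_graph n (e : rel 'I_n) : Prop :=
  (forall x y, e x y = e y x) /\ (forall x, ~~ e x x).

Definition connected_graph n (e : rel 'I_n) : Prop :=
  forall x y, connect e x y.

Definition nbh n (e : rel 'I_n) (x : 'I_n) : {set 'I_n} := [set y | e x y].
Definition deg n (e : rel 'I_n) (x : 'I_n) : nat := #|nbh e x|.

(* minimum / maximum degree (0 on the empty graph) *)
Definition maxdeg n (e : rel 'I_n) : nat := \max_(x : 'I_n) deg e x.

Definition mindeg n (e : rel 'I_n) : nat :=
  \big[minn/maxdeg e]_(x : 'I_n) deg e x.

Definition adjmx (R : pzRingType) n (e : rel 'I_n) : 'M[R]_n :=
  \matrix_(i, j) (e i j)%:R.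

(* s is the list of eigenvalues (with multiplicity) of A, in non-increasing
   order mu_1 >= mu_2 >= ... >= mu_n, i.e. char_poly A = prod (X - mu_i). *)
Definition spectrum (R : realDomainType) n (A : 'M[R]_n) (s : seq R) : Prop :=
  sorted (fun x y => y <= x) s /\ char_poly A = \prod_(x <- s) ('X - x%:P).

(* lambda = max(|mu_2|, |mu_n|) *)
Definition lam_of (R : realDomainType) n (s : seq R) : R :=
  Num.max `|s`_1| `|s`_n.-1|.

(* "f n <= eps * g n eventually, for every eps > 0", i.e. f = o(g) for
   nonnegative f, g *)
Definition little_o (R : realDomainType) (f g : nat -> R) : Prop :=
  forall eps : R, 0 < eps -> exists N, forall n, (N <= n)%N -> f n <= eps * g n.

Definition expander_seq (R : realType) (e : forall n, rel 'I_n) : Prop :=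
  (forall n, simple_graph (e n)) /\
  (forall n, connected_graph (e n)) /\
  (forall eps : R, 0 < eps -> exists N, forall n, (N <= n)%N ->
       `| (maxdeg (e n))%:R / (mindeg (e n))%:R - 1 | <= eps) /\
  (exists s : forall n, seq R,
      (forall n, spectrum (adjmx R (e n)) (s n)) /\
      little_o (fun n => lam_of n (s n)) (fun n => (maxdeg (e n))%:R)).

From HB Require Import structures.
From mathcomp Require Import all_boot all_order all_algebra.
From mathcomp Require Import reals complex ring lra.
From mathcomp Require boolp.
Set Implicit Arguments. Unset Strict Implicit. Unset Printing Implicit Defensive.
Import Order.TTheory GRing.Theory Num.Theory.
Local Open Scope ring_scope.

(* Call a vertex heavy when more than a fraction [dd] of its [et]-neighbours lie
   in [A].  As [et] keeps half of every degree, each heavy vertex sends at least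
   [dd * mindeg / 2] edges of [e] into [A].  Conversely, the expander mixing
   lemma bounds the number of edges between the heavy set [T] and [A]: every
   eigenvalue but the top one is at most [lambda = o(maxdeg)], and near
   regularity makes the all-ones vector almost a top eigenvector.  With
   [theta = dd^3 / 400] bounding [lambda / maxdeg], [maxdeg / mindeg - 1] and
   [|A| / n], the two estimates force [|T| <= dd |A|] for large [n].  A diagonal
   argument lets [dd] tend to 0; the vertices of [A], resp. of its complement,
   that are not heavy form the sets [B] of (a) and (b). *)

Lemma char_poly_similar (R : comNzRingType) n (Q M P : 'M[R]_n) :
  Q *m P = 1%:M -> char_poly (Q *m M *m P) = char_poly M.
Proof.
move=> QP; rewrite /char_poly /char_poly_mx.
have -> : 'X%:M - map_mx polyC (Q *m M *m P) =
    map_mx polyC Q *m ('X%:M - map_mx polyC M) *m map_mx polyC P.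
  rewrite mulmxBr mulmxBl !map_mxM; congr (_ - _).
  by rewrite -mulmxA -scalar_mxC mulmxA -map_mxM QP map_mx1 mul1mx.
rewrite !det_mulmx mulrC mulrA -det_mulmx -map_mxM.
by rewrite (mulmx1C QP) map_mx1 det1 mul1r.
Qed.

Lemma Re_sum (R : rcfType) I (r : seq I) (P : pred I) (F : I -> R[i]) :
  complex.Re (\sum_(i <- r | P i) F i) = \sum_(i <- r | P i) complex.Re (F i).
Proof. by apply: (big_morph (@complex.Re R)) => // -[a b] [c d]. Qed.

(* A real symmetric matrix is diagonalised over [R[i]]; the real and imaginary
   parts [Ur], [Ui] of the unitary [spectralmx] still give a real spectral
   decomposition. *)
Section RealSymmetricSpectral.
Variables (R : realType) (n : nat) (A : 'M[R]_n).
Hypothesis A_sym : A^T = A.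

Local Open Scope complex_scope.
Local Open Scope sesquilinear_scope.

Let Ac : 'M[R[i]]_n := map_mx (real_complex R) A.
Let P := spectralmx Ac.
Let D := spectral_diag Ac.
Let Ur := \matrix_(i, j) complex.Re (P i j).
Let Ui := \matrix_(i, j) complex.Im (P i j).
Let mu i := complex.Re (D 0 i).

Let Ac_hermitian : Ac \is hermsymmx.
Proof.
apply/is_hermitianmxP; rewrite expr0 scale1r; apply/matrixP => i j.
rewrite !mxE /= -{1}A_sym mxE; exact/esym/conjc_real.
Qed.

Let P_unitary : P *m P^t* = 1%:M.
Proof. exact/unitarymxP/spectral_unitarymx. Qed.

Let P_unitary_tr : P^t* *m P = 1%:M.
Proof. exact/mulmx1C/P_unitary. Qed.

Let Ac_spectral : Ac = P^t* *m diag_mx D *m P.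
Proof.
have /orthomx_spectralP := hermitian_normalmx Ac_hermitian.
by rewrite invmx_unitary ?spectral_unitarymx.
Qed.

Let P_diagonalizes : P *m Ac *m P^t* = diag_mx D.
Proof. by rewrite Ac_spectral !mulmxA P_unitary mul1mx -mulmxA P_unitary mulmx1. Qed.

Let spectral_diag_real i : D 0 i = (mu i)%:C.
Proof.
have /mxOverP/(_ 0 i) := hermitian_spectral_diag_real Ac_hermitian.
by rewrite /mu; case: (D 0 i) => a b; rewrite complex_real => /eqP ->.
Qed.

Let sym_spectral_expansion j k :
  A j k = \sum_i mu i * (Ur i j * Ur i k + Ui i j * Ui i k).
Proof.
have := congr1 (fun M : 'M[R[i]]_n => complex.Re (M j k)) Ac_spectral.
rewrite mxE /= => ->.
rewrite mxE Re_sum; apply: eq_bigr => i _.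
rewrite mul_mx_diag !mxE spectral_diag_real.
by case: (P i j) => a b; case: (P i k) => c e /=; ring.
Qed.

Let spectral_resolution_id j k :
  ((j == k)%:R : R) = \sum_i (Ur i j * Ur i k + Ui i j * Ui i k).
Proof.
have -> : ((j == k)%:R : R) = complex.Re ((j == k)%:R : R[i]) by case: (j == k).
have := congr1 (fun M : 'M[R[i]]_n => complex.Re (M j k)) P_unitary_tr.
rewrite /= [in X in X = _]mxE Re_sum !mxE => <-.
apply: eq_bigr => i _; rewrite !mxE.
by case: (P i j) => a b; case: (P i k) => c e /=; ring.
Qed.

Let spectral_row_norm1 i : \sum_j (Ur i j ^+ 2 + Ui i j ^+ 2) = 1.
Proof.
have := congr1 (fun M : 'M[R[i]]_n => complex.Re (M i i)) P_unitary.
rewrite /= [in X in X = _]mxE Re_sum !mxE eqxx mulr1n => /= <-.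
apply: eq_bigr => j _; rewrite !mxE.
by case: (P i j) => a b /=; ring.
Qed.

Let eigenvalue_rayleigh i :
  mu i = \sum_j \sum_k A j k * (Ur i j * Ur i k + Ui i j * Ui i k).
Proof.
have := congr1 (fun M : 'M[R[i]]_n => complex.Re (M i i)) P_diagonalizes.
rewrite /= [in X in _ = X]mxE eqxx mulr1n /mu => <-.
rewrite mxE Re_sum exchange_big; apply: eq_bigr => k _.
rewrite !mxE big_distrl Re_sum; apply: eq_bigr => j _; rewrite !mxE.
by case: (P i j) => a b; case: (P i k) => c e /=; ring.
Qed.

Let spectrum_perm_eigenvalues (s : seq R) :
  char_poly A = \prod_(x <- s) ('X - x%:P) -> perm_eq s [seq mu i | i <- enum 'I_n].
Proof.
move=> charA.
have charAc_diag : char_poly Ac = \prod_(i < n) ('X - (D 0 i)%:P).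
  rewrite Ac_spectral char_poly_similar ?P_unitary_tr //.
  rewrite char_poly_trig ?diag_mx_is_trig //.
  by apply: eq_bigr => i _; rewrite mxE eqxx mulr1n.
apply: (@perm_map_inj _ _ (real_complex R)); first exact: complexI.
have charAc_roots : char_poly Ac = \prod_(x <- s) ('X - (x%:C)%:P).
  by rewrite -map_char_poly charA map_prod_XsubC.
apply: prod_XsubC_eq.
rewrite big_map -charAc_roots charAc_diag -map_comp big_map big_enum /=.
by apply: eq_bigr => i _; rewrite -spectral_diag_real.
Qed.

Lemma real_sym_spectral (s : seq R) : char_poly A = \prod_(x <- s) ('X - x%:P) ->
  exists (Ur Ui : 'M[R]_n) (mu : 'I_n -> R),
  [/\ forall j k, A j k = \sum_i mu i * (Ur i j * Ur i k + Ui i j * Ui i k),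
      forall j k, ((j == k)%:R : R) = \sum_i (Ur i j * Ur i k + Ui i j * Ui i k),
      forall i, \sum_j (Ur i j ^+ 2 + Ui i j ^+ 2) = 1,
      forall i, mu i = \sum_j \sum_k A j k * (Ur i j * Ur i k + Ui i j * Ui i k) &
      perm_eq s [seq mu i | i <- enum 'I_n]].
Proof.
move=> charA; exists Ur, Ui, mu; split.
- exact: sym_spectral_expansion.
- exact: spectral_resolution_id.
- exact: spectral_row_norm1.
- exact: eigenvalue_rayleigh.
- exact: spectrum_perm_eigenvalues.
Qed.
End RealSymmetricSpectral.

Lemma lam_of_ge0 (R : realDomainType) n (s : seq R) : 0 <= lam_of n s.
Proof. by rewrite /lam_of le_max normr_ge0. Qed.

Lemma sorted_lam_of_ge (R : realDomainType) (s : seq R) k :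
  sorted (fun x y => y <= x) s -> (0 < k < size s)%N ->
  `|s`_k| <= lam_of (size s) s.
Proof.
move=> s_sorted /andP[k_gt0 k_lt].
have ge_trans : transitive (fun x y : R => y <= x) by move=> y x z /[swap]; exact: le_trans.
have le1 : s`_k <= s`_1.
  apply: (sorted_leq_nth ge_trans (fun x => lexx x) 0 s_sorted); rewrite ?inE //.
  exact: leq_ltn_trans k_gt0 k_lt.
have ge_last : s`_(size s).-1 <= s`_k.
  apply: (sorted_leq_nth ge_trans (fun x => lexx x) 0 s_sorted); rewrite ?inE //.
  - by rewrite prednK // (leq_ltn_trans _ k_lt).
  - by rewrite -ltnS prednK // (leq_ltn_trans _ k_lt).
rewrite /lam_of le_max; have [sk_ge0|sk_lt0] := lerP 0 s`_k.
  by rewrite ger0_norm // (le_trans le1 (ler_norm _)).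
rewrite ltr0_norm // -[X in _ || (_ <= X)]normrN; apply/orP; right.
by apply: le_trans (ler_norm _); rewrite lerN2.
Qed.

(* Removing one copy of the top eigenvalue [s`_0] from [s] leaves every [mu i],
   [i != i0], at a position [>= 1] of the sorted spectrum. *)
Lemma lam_of_bounds_nontop (R : realDomainType) n (mu : 'I_n -> R) (s : seq R) :
  sorted (fun x y => y <= x) s -> perm_eq s [seq mu i | i <- enum 'I_n] ->
  (0 < n)%N -> exists i0 : 'I_n, forall i, i != i0 -> `|mu i| <= lam_of n s.
Proof.
move=> s_sorted s_perm n_gt0.
have size_s : size s = n by rewrite (perm_size s_perm) size_map size_enum_ord.
case: s => [|x t] in s_sorted s_perm size_s *; first by rewrite -size_s in n_gt0.
have := mem_head x t; rewrite (perm_mem s_perm) => /mapP[i0 _ x_eq].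
exists i0 => i i_neq.
have i0_enum : i0 \in enum 'I_n by rewrite mem_enum.
have t_perm : perm_eq t [seq mu j | j <- rem i0 (enum 'I_n)].
  rewrite -(perm_cons x); apply: perm_trans s_perm _.
  by rewrite x_eq -map_cons perm_map // perm_to_rem.
have : mu i \in t.
  by rewrite (perm_mem t_perm) map_f // (mem_rem_uniq _ (enum_uniq _)) !inE i_neq mem_enum.
move=> /[dup] mu_t; rewrite -index_mem => idx_lt.
rewrite -(nth_index 0 mu_t) -size_s -[t`_ _]/((x :: t)`_(index (mu i) t).+1).
exact: sorted_lam_of_ge.
Qed.

Section RealInequalities.
Variable R : realFieldType.

Lemma norm_dot2_le_amgm (t a b c d : R) : 0 < t ->
  2 * `|a * b + c * d| <= t * (a ^+ 2 + c ^+ 2) + (b ^+ 2 + d ^+ 2) / t.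
Proof.
move=> t_gt0; set S := t * _ + _.
have gap_minus : S - 2 * (a * b + c * d) = ((t * a - b) ^+ 2 + (t * c - d) ^+ 2) / t.
  by rewrite /S; field; rewrite gt_eqF.
have gap_plus : S + 2 * (a * b + c * d) = ((t * a + b) ^+ 2 + (t * c + d) ^+ 2) / t.
  by rewrite /S; field; rewrite gt_eqF.
have sqr_div_ge0 (u v : R) : 0 <= (u ^+ 2 + v ^+ 2) / t.
  by rewrite divr_ge0 ?addr_ge0 ?sqr_ge0 ?ltW.
rewrite -[2]ger0_norm // -normrM ler_norml; apply/andP; split.
- by rewrite -subr_ge0 opprK addrC gap_plus sqr_div_ge0.
- by rewrite -subr_ge0 gap_minus sqr_div_ge0.
Qed.

Lemma ler_sum_pred (I : finType) (P : pred I) (g : I -> R) :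
  (forall j, 0 <= g j) -> \sum_(j | P j) g j <= \sum_j g j.
Proof.
move=> g_ge0; rewrite [X in X <= _]big_mkcond /=; apply: ler_sum => j _.
by case: (P j).
Qed.

Lemma sqr_sum_le_card (I : finType) (X : pred I) (f : I -> R) :
  (\sum_(j in X) f j) ^+ 2 <= #|X|%:R * \sum_(j in X) f j ^+ 2.
Proof.
set S := \sum_(j in X) f j.
have [X0|X_gt0] := posnP #|X|.
  by rewrite /S (eq_bigl _ _ (card0_eq X0)) big_pred0 // X0 mul0r expr0n.
have dev_ge0 : 0 <= \sum_(j in X) (#|X|%:R * f j - S) ^+ 2.
  by apply: sumr_ge0 => j _; rewrite sqr_ge0.
have dev_sum : \sum_(j in X) (#|X|%:R * f j - S) ^+ 2 =
    #|X|%:R * (#|X|%:R * \sum_(j in X) f j ^+ 2 - S ^+ 2).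
  rewrite (eq_bigr (fun j => #|X|%:R ^+ 2 * f j ^+ 2 + (- (2 * #|X|%:R * S) * f j + S ^+ 2)));
    last by move=> j _; ring.
  by rewrite !big_split /= -!mulr_sumr sumr_const -/S -mulr_natl; ring.
by move: dev_ge0; rewrite dev_sum pmulr_rge0 ?ltr0n // subr_ge0.
Qed.

(* Split [a] into its mean [b] and fluctuation [a - b]; Cauchy-Schwarz bounds
   the fluctuation part. *)
Lemma sqr_sum_subset_le (I : finType) (X : pred I) (a : I -> R) : (0 < #|I|)%N ->
  (\sum_(j in X) a j) ^+ 2 <=
   2 * #|X|%:R ^+ 2 * (\sum_j a j) ^+ 2 / #|I|%:R ^+ 2 +
   2 * #|X|%:R * (\sum_j a j ^+ 2 - (\sum_j a j) ^+ 2 / #|I|%:R).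
Proof.
move=> I_gt0; have N_neq0 : #|I|%:R != 0 :> R by rewrite pnatr_eq0 -lt0n.
set N := #|I|%:R; set Sa := \sum_j a j; set b := Sa / N.
have mean_split : \sum_(j in X) a j = #|X|%:R * b + \sum_(j in X) (a j - b).
  by rewrite sumrB sumr_const -mulr_natl; ring.
have variance : \sum_j (a j - b) ^+ 2 = \sum_j a j ^+ 2 - Sa ^+ 2 / N.
  rewrite (eq_bigr (fun j => a j ^+ 2 + (- (2 * b) * a j + b ^+ 2))); last by move=> j _; ring.
  by rewrite !big_split /= -mulr_sumr sumr_const -mulr_natl -/Sa -/N /b; field.
have fluct_le : (\sum_(j in X) (a j - b)) ^+ 2 <= #|X|%:R * (\sum_j a j ^+ 2 - Sa ^+ 2 / N).
  apply: le_trans (sqr_sum_le_card X (fun j => a j - b)) _.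
  by rewrite -variance ler_wpM2l // ler_sum_pred // => j; exact: sqr_ge0.
have sqrD_le (u w : R) : (u + w) ^+ 2 <= 2 * u ^+ 2 + 2 * w ^+ 2.
  by rewrite -subr_ge0 (_ : _ - _ = (u - w) ^+ 2) ?sqr_ge0 //; ring.
rewrite mean_split; apply: le_trans (sqrD_le _ _) _.
have -> : 2 * (#|X|%:R * b) ^+ 2 = 2 * #|X|%:R ^+ 2 * Sa ^+ 2 / N ^+ 2.
  by rewrite /b; field.
by rewrite lerD2l -mulrA ler_pM2l.
Qed.
End RealInequalities.

Section Degrees.
Variables (n : nat) (e : rel 'I_n).

Lemma deg_le_maxdeg j : (deg e j <= maxdeg e)%N.
Proof. exact: leq_bigmax. Qed.

Lemma mindeg_le_deg j : (mindeg e <= deg e j)%N.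
Proof.
by rewrite /mindeg; have := @bigmin_le _ nat _ (maxdeg e) j (deg e); rewrite minEnat.
Qed.

Lemma mindeg_gt0_dim (mindeg_gt0 : (0 < mindeg e)%N) : (0 < n)%N.
Proof. by case: n e mindeg_gt0 => // e0; rewrite /mindeg /maxdeg !big_ord0. Qed.

Lemma deg_sum (R : semiRingType) j : (deg e j)%:R = \sum_k (e j k)%:R :> R.
Proof.
rewrite /deg -sum1_card natr_sum [LHS]big_mkcond /=.
by apply: eq_bigr => k _; rewrite /nbh inE; case: (e j k).
Qed.

Lemma sum_adj_endpoints (R : comSemiRingType) (q : 'I_n -> R) :
  (forall j k, e j k = e k j) ->
  \sum_j \sum_k (e j k)%:R * (q j + q k) = 2 * \sum_j (deg e j)%:R * q j.
Proof.
move=> e_sym.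
have swap : \sum_j \sum_k (e j k)%:R * q k = \sum_j \sum_k (e j k)%:R * q j.
  by rewrite exchange_big; apply: eq_bigr => j _; apply: eq_bigr => k _; rewrite e_sym.
have rows : \sum_j \sum_k (e j k)%:R * q j = \sum_j (deg e j)%:R * q j.
  by apply: eq_bigr => j _; rewrite deg_sum big_distrl.
rewrite (eq_bigr (fun j => \sum_k (e j k)%:R * q j + \sum_k (e j k)%:R * q k)); last first.
  by move=> j _; rewrite -big_split; apply: eq_bigr => k _; rewrite mulrDr.
by rewrite big_split /= swap rows mulr_natl mulr2n.
Qed.
End Degrees.

Definition indicator {R : semiRingType} (T : finType) (X : {set T}) (j : T) : R :=
  (j \in X)%:R.

Lemma sum_indicatorM (R : semiRingType) (T : finType) (X : {set T}) (f : T -> R) :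
  \sum_j indicator X j * f j = \sum_(j in X) f j.
Proof.
rewrite [RHS]big_mkcond; apply: eq_bigr => j _.
by rewrite /indicator; case: (j \in X); rewrite ?mul1r ?mul0r.
Qed.

Lemma sum_indicator_sqr (R : semiRingType) (T : finType) (X : {set T}) :
  \sum_j indicator X j ^+ 2 = #|X|%:R :> R.
Proof.
rewrite -sum1_card natr_sum [RHS]big_mkcond /=; apply: eq_bigr => j _.
by rewrite /indicator; case: (j \in X); rewrite ?expr1n ?expr0n.
Qed.

Definition irregularity (R : numFieldType) n (e : rel 'I_n) (L : R) : R :=
  ((maxdeg e)%:R - (mindeg e)%:R) / ((maxdeg e)%:R - L).

(* Upper bound for [2 e(X, Y)] in the mixing lemma: the top eigenvalue
   ([<= maxdeg]) only sees the top coordinate of the indicator of [X], at most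
   [2 |X|^2 / n + 2 |X| irregularity]; the other eigenvalues ([<= L]) see at
   most [|X|]. *)
Definition mixing_bound (R : numFieldType) n (e : rel 'I_n) (L : R) (X : {set 'I_n}) : R :=
  #|X|%:R * ((maxdeg e)%:R * (2 * #|X|%:R / n%:R + 2 * irregularity e L) + L).

Section SpectralEdgeCount.
Variables (R : realFieldType) (n : nat) (e : rel 'I_n).
Hypothesis e_sym : forall j k, e j k = e k j.
Variables (Ur Ui : 'M[R]_n) (mu : 'I_n -> R).
Local Notation a j k := ((e j k)%:R : R).
Local Notation w i j k := (Ur i j * Ur i k + Ui i j * Ui i k).
Hypothesis adj_expansion : forall j k, a j k = \sum_i mu i * w i j k.
Hypothesis id_expansion : forall j k, ((j == k)%:R : R) = \sum_i w i j k.
Hypothesis row_norm1 : forall i, \sum_j (Ur i j ^+ 2 + Ui i j ^+ 2) = 1.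
Hypothesis mu_rayleigh : forall i, mu i = \sum_j \sum_k a j k * w i j k.

Definition coord_re i (x : 'I_n -> R) := \sum_j x j * Ur i j.
Definition coord_im i (x : 'I_n -> R) := \sum_j x j * Ui i j.
Definition coord_sqr i x := coord_re i x ^+ 2 + coord_im i x ^+ 2.
Definition edge_form (x y : 'I_n -> R) := \sum_j \sum_k x j * a j k * y k.

Lemma coord_sqr_ge0 i x : 0 <= coord_sqr i x.
Proof. by rewrite addr_ge0 ?sqr_ge0. Qed.

Lemma bilinear_expansion (c : 'I_n -> 'I_n -> R) (v : 'I_n -> R) x y :
  (forall j k, c j k = \sum_i v i * w i j k) ->
  \sum_j \sum_k x j * c j k * y k =
  \sum_i v i * (coord_re i x * coord_re i y + coord_im i x * coord_im i y).
Proof.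
move=> c_exp.
have -> : \sum_i v i * (coord_re i x * coord_re i y + coord_im i x * coord_im i y) =
    \sum_i \sum_j \sum_k x j * (v i * w i j k) * y k.
  apply: eq_bigr => i _.
  rewrite /coord_re /coord_im !big_distrl /= -big_split mulr_sumr; apply: eq_bigr => j _.
  rewrite !big_distrr -big_split mulr_sumr; apply: eq_bigr => k _ /=.
  ring.
rewrite [RHS]exchange_big; apply: eq_bigr => j _.
rewrite [RHS]exchange_big; apply: eq_bigr => k _.
by rewrite c_exp big_distrr big_distrl.
Qed.

Lemma edge_form_spectral x y :
  edge_form x y = \sum_i mu i * (coord_re i x * coord_re i y + coord_im i x * coord_im i y).
Proof. exact: bilinear_expansion. Qed.

Lemma parseval x : \sum_j x j ^+ 2 = \sum_i coord_sqr i x.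
Proof.
have id_exp1 j k : ((j == k)%:R : R) = \sum_i 1 * w i j k.
  by rewrite id_expansion; apply: eq_bigr => i _; rewrite mul1r.
have := bilinear_expansion x x id_exp1.
under [in RHS]eq_bigr do rewrite mul1r -!expr2.
move=> <-; apply: eq_bigr => j _.
rewrite (bigD1 j) //= eqxx mulr1 big1 ?addr0 ?expr2 // => k k_neq.
by rewrite eq_sym (negbTE k_neq) mulr0 mul0r.
Qed.

Lemma eigenvalue_norm_le_maxdeg i : `|mu i| <= (maxdeg e)%:R.
Proof.
set q := fun j => Ur i j ^+ 2 + Ui i j ^+ 2.
have amgm : 2 * `|mu i| <= \sum_j \sum_k a j k * (q j + q k).
  rewrite mu_rayleigh; apply: le_trans (ler_wpM2l _ (ler_norm_sum _ _ _)) _ => //.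
  rewrite mulr_sumr; apply: ler_sum => j _.
  apply: le_trans (ler_wpM2l _ (ler_norm_sum _ _ _)) _ => //.
  rewrite mulr_sumr; apply: ler_sum => k _.
  rewrite normrM normr_nat mulrCA ler_wpM2l //.
  have := norm_dot2_le_amgm (Ur i j) (Ur i k) (Ui i j) (Ui i k) ltr01.
  by rewrite mul1r divr1 /q addrACA.
have deg_weighted : \sum_j (deg e j)%:R * q j <= (maxdeg e)%:R.
  apply: le_trans (_ : _ <= \sum_j (maxdeg e)%:R * q j) _.
    apply: ler_sum => j _; apply: ler_wpM2r; first by rewrite addr_ge0 ?sqr_ge0.
    by rewrite ler_nat deg_le_maxdeg.
  by rewrite -mulr_sumr row_norm1 mulr1.
rewrite sum_adj_endpoints // in amgm.
by rewrite -(ler_pM2l (_ : 0 < 2)) // (le_trans amgm) // ler_pM2l.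
Qed.

Variables (i0 : 'I_n) (L : R).
Hypothesis L_ge0 : 0 <= L.
Hypothesis mu_nontop_le : forall i, i != i0 -> `|mu i| <= L.
Local Notation Dl := ((maxdeg e)%:R : R).
Local Notation dl := ((mindeg e)%:R : R).

Lemma edge_form_le x y t : 0 < t ->
  2 * edge_form x y <= Dl * (t * coord_sqr i0 x + coord_sqr i0 y / t) +
                       L * (t * \sum_j x j ^+ 2 + (\sum_j y j ^+ 2) / t).
Proof.
move=> t_gt0.
have term_le i : 2 * (mu i * (coord_re i x * coord_re i y + coord_im i x * coord_im i y)) <=
    `|mu i| * (t * coord_sqr i x + coord_sqr i y / t).
  apply: le_trans (ler_norm _) _.
  rewrite normrM normr_nat normrM mulrCA ler_wpM2l //.
  exact: norm_dot2_le_amgm.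
have weight_ge0 i : 0 <= t * coord_sqr i x + coord_sqr i y / t.
  by rewrite addr_ge0 ?mulr_ge0 ?divr_ge0 ?coord_sqr_ge0 ?invr_ge0 ?ltW.
rewrite edge_form_spectral mulr_sumr; apply: le_trans (ler_sum _ (fun i _ => term_le i)) _.
rewrite (bigD1 i0) //=; apply: lerD.
  by apply: ler_wpM2r => //; exact: eigenvalue_norm_le_maxdeg.
apply: le_trans (_ : _ <= \sum_(i | i != i0) L * (t * coord_sqr i x + coord_sqr i y / t)) _.
  by apply: ler_sum => i i_neq; apply: ler_wpM2r => //; exact: mu_nontop_le.
rewrite -mulr_sumr ler_wpM2l //; apply: le_trans (ler_sum_pred _ weight_ge0) _.
by rewrite big_split /= -mulr_sumr -mulr_suml !parseval.
Qed.

Let ones : 'I_n -> R := fun=> 1.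

Lemma coord_sqr_ones_off_top :
  n%:R - coord_sqr i0 ones = \sum_(i | i != i0) coord_sqr i ones.
Proof.
have ones_sqr : \sum_j ones j ^+ 2 = n%:R by rewrite /ones expr1n sumr_const card_ord.
by rewrite -ones_sqr parseval (bigD1 i0) //= addrAC subrr add0r.
Qed.

(* The all-ones vector is nearly a top eigenvector: its Rayleigh quotient is
   at least [dl], while any mass off [i0] only sees eigenvalues below [L]. *)
Lemma top_coord_ones_defect : (Dl - L) * (n%:R - coord_sqr i0 ones) <= n%:R * (Dl - dl).
Proof.
have form_ge : n%:R * dl <= edge_form ones ones.
  rewrite /edge_form -[n in n%:R * _]card_ord -sumr_const mulr_suml; apply: ler_sum => j _.
  rewrite mul1r (le_trans (_ : _ <= (deg e j)%:R)) ?ler_nat ?mindeg_le_deg // deg_sum.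
  by apply: ler_sum => k _; rewrite /ones mulr1 mul1r.
have form_le : edge_form ones ones <= Dl * coord_sqr i0 ones + L * (n%:R - coord_sqr i0 ones).
  have diag : edge_form ones ones = \sum_i mu i * coord_sqr i ones.
    by rewrite edge_form_spectral; apply: eq_bigr => i _; rewrite /coord_sqr !expr2.
  have term_le i B : `|mu i| <= B -> mu i * coord_sqr i ones <= B * coord_sqr i ones.
    move=> mu_le; apply: le_trans (ler_norm _) _.
    by rewrite normrM (ger0_norm (coord_sqr_ge0 _ _)) ler_wpM2r ?coord_sqr_ge0.
  rewrite diag (bigD1 i0) //= coord_sqr_ones_off_top mulr_sumr.
  apply: lerD; first exact/term_le/eigenvalue_norm_le_maxdeg.
  by apply: ler_sum => i /mu_nontop_le/term_le.
lra.
Qed.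

Lemma top_coord_indicator_le (X : {set 'I_n}) : (0 < n)%N -> L < Dl ->
  coord_sqr i0 (indicator X) <= 2 * #|X|%:R ^+ 2 / n%:R + 2 * #|X|%:R * irregularity e L.
Proof.
move=> n_gt0 L_lt; have n_pos : 0 < n%:R :> R by rewrite ltr0n.
set c := coord_sqr i0 ones; set u := c / n%:R; set k := #|X|%:R.
have sum_ones (f : 'I_n -> R) : \sum_j ones j * f j = \sum_j f j.
  by apply: eq_bigr => j _; rewrite /ones mul1r.
have c_sums : c = (\sum_j Ur i0 j) ^+ 2 + (\sum_j Ui i0 j) ^+ 2.
  by rewrite /c /coord_sqr /coord_re /coord_im !sum_ones.
have row1 : \sum_j Ur i0 j ^+ 2 + \sum_j Ui i0 j ^+ 2 = 1 by rewrite -big_split row_norm1.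
have c_le : c <= n%:R.
  by rewrite -subr_ge0 coord_sqr_ones_off_top sumr_ge0 // => i _; exact: coord_sqr_ge0.
have u_le1 : u <= 1 by rewrite /u ler_pdivrMr // mul1r.
have u_ge0 : 0 <= u by rewrite /u divr_ge0 ?coord_sqr_ge0 ?ltW.
have u_defect : 1 - u <= irregularity e L.
  rewrite /irregularity ler_pdivlMr ?subr_gt0 //.
  have -> : (1 - u) * (Dl - L) = (Dl - L) * (n%:R - c) / n%:R by rewrite /u; field; rewrite gt_eqF.
  by rewrite ler_pdivrMr // [X in _ <= X]mulrC top_coord_ones_defect.
have card_I : (0 < #|'I_n|)%N by rewrite card_ord.
have split_bound : coord_sqr i0 (indicator X) <= 2 * k ^+ 2 / n%:R * u + 2 * k * (1 - u).
  rewrite /coord_sqr /coord_re /coord_im !sum_indicatorM.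
  have -> : 2 * k ^+ 2 / n%:R * u + 2 * k * (1 - u) =
    (2 * k ^+ 2 * (\sum_j Ur i0 j) ^+ 2 / n%:R ^+ 2 +
     2 * k * (\sum_j Ur i0 j ^+ 2 - (\sum_j Ur i0 j) ^+ 2 / n%:R)) +
    (2 * k ^+ 2 * (\sum_j Ui i0 j) ^+ 2 / n%:R ^+ 2 +
     2 * k * (\sum_j Ui i0 j ^+ 2 - (\sum_j Ui i0 j) ^+ 2 / n%:R)).
    by rewrite /u c_sums -row1; field; rewrite gt_eqF //= row1 oner_eq0.
  have subset_le (f : 'I_n -> R) := sqr_sum_subset_le (mem X) f card_I.
  by rewrite card_ord in subset_le; apply: lerD; apply: subset_le.
apply: le_trans split_bound _; apply: lerD.
  by apply: ler_piMr => //; apply: divr_ge0; rewrite ?mulr_ge0 ?sqr_ge0.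
by rewrite ler_wpM2l // mulr_ge0.
Qed.

Lemma edge_form_indicator (X Y : {set 'I_n}) :
  edge_form (indicator X) (indicator Y) = (\sum_(x in X) #|nbh e x :&: Y|)%:R.
Proof.
rewrite natr_sum [RHS]big_mkcond /=; apply: eq_bigr => j _.
rewrite -sum1_card natr_sum [X in _ = if _ then X else _]big_mkcond /= /indicator.
case: (j \in X); last by rewrite big1 // => k _; rewrite !mul0r.
apply: eq_bigr => k _; rewrite /nbh !inE mul1r.
by case: (e j k); case: (k \in Y); rewrite ?mulr1 ?mulr0.
Qed.

Lemma edge_count_le_mixing (X Y : {set 'I_n}) t : (0 < n)%N -> L < Dl -> 0 < t ->
  2 * (\sum_(x in X) #|nbh e x :&: Y|)%:R <= t * mixing_bound e L X + mixing_bound e L Y / t.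
Proof.
move=> n_gt0 L_lt t_gt0; rewrite -edge_form_indicator.
apply: le_trans (edge_form_le _ _ t_gt0) _; rewrite !sum_indicator_sqr.
have coordX := top_coord_indicator_le X n_gt0 L_lt.
have coordY := top_coord_indicator_le Y n_gt0 L_lt.
rewrite /mixing_bound; set g := irregularity e L in coordX coordY *.
apply: le_trans (_ : _ <= Dl * (t * (2 * #|X|%:R ^+ 2 / n%:R + 2 * #|X|%:R * g) +
     (2 * #|Y|%:R ^+ 2 / n%:R + 2 * #|Y|%:R * g) / t) + L * (t * #|X|%:R + #|Y|%:R / t)) _.
  rewrite lerD2r ler_wpM2l //; apply: lerD.
  - by apply: ler_wpM2l; [exact: ltW | exact: coordX].
  - by apply: ler_wpM2r; [rewrite invr_ge0 ltW | exact: coordY].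
by rewrite le_eqVlt; apply/orP; left; apply/eqP; field; rewrite gt_eqF // pnatr_eq0 -lt0n.
Qed.
End SpectralEdgeCount.

Lemma expander_mixing (R : realType) n (e : rel 'I_n) (s : seq R) (X Y : {set 'I_n}) t :
  simple_graph e -> spectrum (adjmx R e) s -> (0 < n)%N -> lam_of n s < (maxdeg e)%:R ->
  0 < t -> 2 * (\sum_(x in X) #|nbh e x :&: Y|)%:R <=
           t * mixing_bound e (lam_of n s) X + mixing_bound e (lam_of n s) Y / t.
Proof.
move=> [e_sym _] [s_sorted charA] n_gt0 lam_lt t_gt0.
have A_sym : (adjmx R e)^T = adjmx R e by apply/matrixP => i j; rewrite !mxE e_sym.
have [Ur [Ui [mu [adj_exp id_exp row1 rayleigh s_perm]]]] := real_sym_spectral A_sym charA.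
have [i0 mu_le] := lam_of_bounds_nontop s_sorted s_perm n_gt0.
apply: (@edge_count_le_mixing _ _ _ e_sym Ur Ui mu _ id_exp row1 _ i0 _ (lam_of_ge0 n s) mu_le)
  => //.
- by move=> j k; rewrite -adj_exp mxE.
- by move=> i; rewrite rayleigh; apply: eq_bigr => j _; apply: eq_bigr => k _; rewrite mxE.
Qed.

Definition nbh_frac {R : numFieldType} n (e : rel 'I_n) (A : {set 'I_n}) u : R :=
  #|nbh e u :&: A|%:R / #|nbh e u|%:R.

Definition heavy (R : numFieldType) n (e : rel 'I_n) (A : {set 'I_n}) (dd : R) :=
  [set u | dd < nbh_frac e A u].

Section Heavy.
Variables (R : realFieldType) (n : nat) (e : rel 'I_n) (A : {set 'I_n}).

Lemma nbh_frac_le1 u : nbh_frac e A u <= 1 :> R.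
Proof.
rewrite /nbh_frac; have [->|deg_gt0] := posnP #|nbh e u|; first by rewrite invr0 mulr0.
by rewrite ler_pdivrMr ?ltr0n // mul1r ler_nat subset_leq_card ?subsetIl.
Qed.

Lemma heavy1 : heavy e A (1 : R) = set0.
Proof. by apply/setP => u; rewrite !inE ltNge nbh_frac_le1. Qed.

Lemma heavy_nbh_gt (dd : R) u : 0 <= dd -> u \in heavy e A dd ->
  dd * (deg e u)%:R < #|nbh e u :&: A|%:R.
Proof.
rewrite inE /nbh_frac /deg => dd_ge0.
have [->|deg_gt0] := posnP #|nbh e u|; first by rewrite invr0 mulr0 ltNge dd_ge0.
by rewrite ltr_pdivlMr ?ltr0n.
Qed.
End Heavy.

Lemma heavy_edges_ge (R : realFieldType) n (e et : rel 'I_n) (A : {set 'I_n}) (c dd : R) :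
  (forall x y, et x y -> e x y) -> 0 <= c -> (forall v, c * (deg e v)%:R <= (deg et v)%:R) ->
  0 <= dd -> #|heavy et A dd|%:R * (dd * c * (mindeg e)%:R) <=
             (\sum_(x in heavy et A dd) #|nbh e x :&: A|)%:R.
Proof.
move=> et_sub c_ge0 et_deg dd_ge0.
rewrite mulr_natl -sumr_const natr_sum; apply: ler_sum => u u_heavy; rewrite -mulrA.
have deg_bound : c * (mindeg e)%:R <= (deg et u)%:R.
  by rewrite (le_trans _ (et_deg u)) // ler_wpM2l // ler_nat mindeg_le_deg.
apply: le_trans (ler_wpM2l dd_ge0 deg_bound) _.
apply: le_trans (ltW (heavy_nbh_gt dd_ge0 u_heavy)) _.
rewrite ler_nat subset_leq_card // setSI //; apply/subsetP => y; rewrite !inE; exact: et_sub.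
Qed.

Section Arithmetic.
Variable R : realFieldType.

Lemma ratio_near1 (D d : nat) (th : R) : th < 1 -> `|D%:R / d%:R - 1| <= th ->
  (0 < d)%N /\ D%:R <= (1 + th) * d%:R.
Proof.
move=> th_lt1; have [->|d_gt0] := posnP d.
  by rewrite invr0 mulr0 sub0r normrN normr1 => /(lt_le_trans th_lt1); rewrite ltxx.
rewrite ler_norml => /andP[_ ratio_le]; split => //.
by rewrite -ler_pdivrMr ?ltr0n //; lra.
Qed.

Lemma mixing_factor_le (D dl L g th x N : R) :
  0 < N -> 0 <= x -> 0 <= dl -> 0 <= th <= 1 -> D <= (1 + th) * dl ->
  0 <= g <= 2 * th -> L <= th * D ->
  D * (2 * x / N + 2 * g) + L <= dl * (4 * x / N + 10 * th).
Proof.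
move=> N_gt0 x_ge0 dl_ge0 /andP[th_ge0 th_le1] D_le /andP[g_ge0 g_le] L_le.
rewrite -[2 * x / N]mulrA -[4 * x / N]mulrA; set v := x / N.
have v_ge0 : 0 <= v by rewrite divr_ge0 // ltW.
have D_le2 : D <= 2 * dl by nra.
have L_le2 : L <= 2 * th * dl by nra.
have D_term : D * (2 * v + 2 * g) <= 2 * dl * (2 * v + 2 * g) by apply: ler_wpM2r; lra.
have g_term : dl * g <= dl * (2 * th) by apply: ler_wpM2l.
lra.
Qed.

Lemma irregularity_small (D dl L th : R) :
  0 < dl -> dl <= D -> D <= (1 + th) * dl -> L <= th * D -> 0 < th -> th <= 2^-1 ->
  L < D /\ 0 <= (D - dl) / (D - L) <= 2 * th.
Proof.
move=> dl_gt0 dl_le D_le L_le th_gt0 th_le.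
have D_ge0 : 0 <= D by lra.
have thD_le : th * D <= 2^-1 * D by rewrite ler_wpM2r.
have L_lt : L < D by lra.
split=> //; apply/andP; split; first by rewrite divr_ge0 // subr_ge0 // ltW.
have th_dl : th * dl <= th * D by apply: ler_wpM2l; [exact: ltW | exact: dl_le].
have th_L : th * L <= th * (2^-1 * D).
  by apply: ler_wpM2l; [exact: ltW | exact: le_trans L_le thD_le].
by rewrite ler_pdivrMr ?subr_gt0 //; lra.
Qed.

Lemma heavy_count_arith (m a N th dd : R) :
  0 < N -> 0 <= m <= N -> 0 <= a <= th * N -> 0 < dd <= 1 -> th * 400 <= dd ^+ 3 ->
  m * dd <= dd / 12 * (m * (4 * m / N + 10 * th)) + a * (4 * a / N + 10 * th) / (dd / 12) ->
  m <= dd * a.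
Proof.
move=> N_gt0 /andP[m_ge0 m_le] /andP[a_ge0 a_le] /andP[dd_gt0 dd_le1] th_le key.
have dd3_le1 : dd ^+ 3 <= 1 by rewrite expr_le1 // ltW.
have th_small : th <= 1 / 400 by lra.
have th_ge0 : 0 <= th by nra.
have mN : m / N <= 1 by rewrite ler_pdivrMr ?mul1r.
have aN : a / N <= th by rewrite ler_pdivrMr.
have m_factor : m * (4 * m / N + 10 * th) <= 5 * m by rewrite -mulrA; nra.
have a_factor : a * (4 * a / N + 10 * th) <= 14 * th * a by rewrite -mulrA; nra.
have t_gt0 : 0 < dd / 12 by rewrite divr_gt0.
have m_term : dd / 12 * (m * (4 * m / N + 10 * th)) <= 5 / 12 * dd * m.
  by apply: le_trans (ler_wpM2l (ltW t_gt0) m_factor) _; lra.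
have a_term : a * (4 * a / N + 10 * th) / (dd / 12) <= 168 * (th * a / dd).
  apply: le_trans (ler_wpM2r _ a_factor) _; first by rewrite invr_ge0 ltW.
  have -> : 14 * th * a / (dd / 12) = 168 * (th * a / dd) by field; rewrite gt_eqF.
  exact: lexx.
set z := th * a / dd in a_term.
have z_dd : z * dd = th * a by rewrite divfK ?gt_eqF.
have quad : m * dd ^+ 2 <= 18 / 25 * dd ^+ 3 * a.
  have lin : 7 / 12 * (m * dd) <= 168 * z by lra.
  have lin2 := ler_wpM2r (ltW dd_gt0) lin.
  have : 288 * (th * a) <= 288 / 400 * (dd ^+ 3 * a) by nra.
  rewrite expr2; lra.
have dd3_split : 18 / 25 * dd ^+ 3 * a = 18 / 25 * dd * a * dd ^+ 2 by ring.
rewrite dd3_split ler_pM2r ?exprn_gt0 // in quad.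
nra.
Qed.
End Arithmetic.

Lemma card_heavy_le (R : realType) n (e et : rel 'I_n) (s : seq R) (A : {set 'I_n})
    (th dd : R) :
  simple_graph e -> spectrum (adjmx R e) s -> (forall x y, et x y -> e x y) ->
  (forall v, 2^-1 * (deg e v)%:R <= (deg et v)%:R :> R) ->
  (0 < mindeg e)%N -> (maxdeg e)%:R <= (1 + th) * (mindeg e)%:R ->
  lam_of n s <= th * (maxdeg e)%:R -> #|A|%:R <= th * n%:R ->
  0 < th -> th * 400 <= dd ^+ 3 -> 0 < dd <= 1 ->
  #|heavy et A dd|%:R <= dd * #|A|%:R.
Proof.
move=> e_simple e_spec et_sub et_deg mindeg_gt0 D_le lam_le A_le th_gt0 th_le dd_bounds.
have /andP[dd_gt0 dd_le1] := dd_bounds.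
have n_gt0 := mindeg_gt0_dim mindeg_gt0; have n_pos : 0 < n%:R :> R by rewrite ltr0n.
set D : R := (maxdeg e)%:R in D_le lam_le *; set dl : R := (mindeg e)%:R in D_le *.
set L := lam_of n s in lam_le *; set T := heavy et A dd.
have dl_gt0 : 0 < dl by rewrite ltr0n.
have dl_le : dl <= D.
  by rewrite ler_nat (leq_trans (mindeg_le_deg e (Ordinal n_gt0))) ?deg_le_maxdeg.
have dd3_le1 : dd ^+ 3 <= 1 by rewrite expr_le1 // ltW.
have th_le_half : th <= 2^-1 by lra.
have [L_lt g_bounds] := irregularity_small dl_gt0 dl_le D_le lam_le th_gt0 th_le_half.
(* [t = dd / 12] keeps the [T]-part of the mixing bound below half the lower
   bound [|T| * dd * mindeg / 2]. *)
have t_gt0 : 0 < dd / 12 by rewrite divr_gt0.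
have half_ge0 : 0 <= 2^-1 :> R by rewrite invr_ge0.
have low := heavy_edges_ge A et_sub half_ge0 et_deg (ltW dd_gt0).
have up := expander_mixing T A e_simple e_spec n_gt0 L_lt t_gt0.
have th_unit : 0 <= th <= 1 by apply/andP; split; lra.
pose F (X : {set 'I_n}) := 4 * #|X|%:R / n%:R + 10 * th.
have factor X : mixing_bound e L X <= #|X|%:R * (dl * F X).
  rewrite /mixing_bound ler_wpM2l //.
  exact: mixing_factor_le n_pos (ler0n _ _) (ltW dl_gt0) th_unit D_le g_bounds lam_le.
have T_le_n : #|T|%:R <= n%:R :> R by rewrite ler_nat (leq_trans (max_card _)) ?card_ord.
apply: (heavy_count_arith n_pos _ _ dd_bounds th_le); first by rewrite T_le_n andbT.
  by rewrite A_le andbT.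
rewrite -(ler_pM2l dl_gt0).
have -> : dl * (#|T|%:R * dd) = 2 * (#|T|%:R * (dd * 2^-1 * dl)) by field.
apply: le_trans (ler_wpM2l _ low) _ => //; apply: le_trans up _.
have -> : dl * (dd / 12 * (#|T|%:R * F T) + #|A|%:R * F A / (dd / 12)) =
    dd / 12 * (#|T|%:R * (dl * F T)) + #|A|%:R * (dl * F A) / (dd / 12).
  by field; rewrite gt_eqF.
apply: lerD; first by apply: ler_wpM2l; [exact: ltW | exact: factor].
by apply: ler_wpM2r; [rewrite invr_ge0 ltW | exact: factor].
Qed.

Lemma heavy_eventually_small (R : realType) (e et : forall n, rel 'I_n)
    (A : forall n, {set 'I_n}) :
  expander_seq R e -> (forall n (x y : 'I_n), et n x y -> e n x y) ->
  (forall n (v : 'I_n), 2^-1 * (deg (e n) v)%:R <= (deg (et n) v)%:R :> R) ->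
  little_o (fun n => #|A n|%:R) (fun n => n%:R : R) ->
  forall dd : R, 0 < dd -> dd <= 1 -> exists N, forall n, (N <= n)%N ->
    #|heavy (et n) (A n) dd|%:R <= dd * #|A n|%:R.
Proof.
move=> [e_simple [_ [ratio_near [s [e_spec lam_small]]]]] et_sub et_deg A_small dd dd_gt0 dd_le1.
pose th := dd ^+ 3 / 400.
have th_gt0 : 0 < th by rewrite divr_gt0 ?exprn_gt0.
have dd3_le1 : dd ^+ 3 <= 1 by rewrite expr_le1 // ltW.
have th_lt1 : th < 1 by rewrite /th; lra.
have [N1 near1] := ratio_near th th_gt0.
have [N2 lam_le] := lam_small th th_gt0.
have [N3 A_le] := A_small th th_gt0.
exists (maxn N1 (maxn N2 N3)) => n; rewrite !geq_max => /and3P[n1 n2 n3].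
have [mindeg_gt0 D_le] := ratio_near1 th_lt1 (near1 n n1).
apply: card_heavy_le (e_simple n) (e_spec n) (et_sub n) (et_deg n) mindeg_gt0 D_le
  (lam_le n n2) (A_le n n3) th_gt0 _ _; first by rewrite /th mulfVK // pnatr_eq0.
by rewrite dd_gt0 dd_le1.
Qed.

Lemma diagonal_choice (P : nat -> nat -> Prop) :
  (forall n, P 0%N n) -> (forall k, exists N, forall n, (N <= n)%N -> P k n) ->
  exists kf : nat -> nat, (forall n, P (kf n) n) /\
    (forall K, exists N, forall n, (N <= n)%N -> (K <= kf n)%N).
Proof.
move=> P0 /boolp.choice[Nf P_Nf].
exists (fun n => \max_(k < n.+1 | (Nf k <= n)%N) (k : nat)); split.
  move=> n; apply: (big_ind (fun k => P k n)) => //; last by move=> k; exact: P_Nf.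
  by move=> x y Px Py; rewrite /maxn; case: ltnP.
move=> K; exists (maxn K (Nf K)) => n; rewrite geq_max => /andP[K_le NfK_le].
have K_lt : (K < n.+1)%N by rewrite ltnS.
exact: (@leq_bigmax_cond _ (fun k : 'I_n.+1 => (Nf k <= n)%N) (fun k => k) (Ordinal K_lt)).
Qed.

Lemma vanishing_threshold (R : realType) (et : forall n, rel 'I_n) (A : forall n, {set 'I_n}) :
  (forall dd : R, 0 < dd -> dd <= 1 -> exists N, forall n, (N <= n)%N ->
     #|heavy (et n) (A n) dd|%:R <= dd * #|A n|%:R) ->
  exists f : nat -> R, (forall n, #|heavy (et n) (A n) (f n)|%:R <= f n * #|A n|%:R) /\
    (forall d : R, 0 < d -> exists N, forall n, (N <= n)%N -> f n <= d).
Proof.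
move=> eventually_small.
pose F (k : nat) : R := k.+1%:R^-1.
have F_gt0 k : 0 < F k by rewrite invr_gt0 ltr0n.
have F_le1 k : F k <= 1 by rewrite invf_le1 ?ltr0n // ler1n.
pose P k n := #|heavy (et n) (A n) (F k)|%:R <= F k * #|A n|%:R.
have P0 n : P 0%N n by rewrite /P /F invr1 heavy1 cards0 mul1r.
have PK k : exists N, forall n, (N <= n)%N -> P k n := eventually_small _ (F_gt0 k) (F_le1 k).
have [kf [P_kf kf_large]] := diagonal_choice P0 PK.
exists (F \o kf); split => // d d_gt0.
have [K d_inv_lt] : exists K, d^-1 < K%:R.
  by exists (Num.Def.archi_bound d^-1); apply: archi_boundP; rewrite invr_ge0 ltW.
have [N K_le] := kf_large K; exists N => n /K_le K_le_kf.
rewrite /= /F -[d]invrK lef_pV2 ?posrE ?ltr0n ?invr_gt0 //.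
by apply: le_trans (ltW d_inv_lt) _; rewrite ler_nat leqW.
Qed.

Lemma card_setD_ge (R : realDomainType) (T : finType) (A H : {set T}) (d : R) :
  #|H|%:R <= d * #|A|%:R -> (1 - d) * #|A|%:R <= #|A :\: H|%:R.
Proof.
move=> H_le; have := cardsID H A; move/(congr1 (fun k => k%:R : R)); rewrite natrD => A_eq.
have AH_le : #|A :&: H|%:R <= #|H|%:R :> R by rewrite ler_nat subset_leq_card ?subsetIr.
lra.
Qed.

Theorem lemma2p12 (R : realType) (e : forall n, rel 'I_n)
  (et : forall n, rel 'I_n) (eps : R) (A : forall n, {set 'I_n}) :
  expander_seq R e ->
  0 < eps ->
  (forall n, simple_graph (et n)) ->
  (forall n (x y : 'I_n), et n x y -> e n x y) ->
  (forall n (v : 'I_n), (2^-1 + eps) * (deg (e n) v)%:R <= (deg (et n) v)%:R) ->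
  @little_o R (fun n => (#|A n|)%:R) (fun n => n%:R : R) ->
  (* (a) *)
  (exists B : forall n, {set 'I_n},
     (forall n, B n \subset A n) /\
     (forall d : R, 0 < d -> exists N, forall n, (N <= n)%N ->
        (1 - d) * (#|A n|)%:R <= (#|B n|)%:R) /\
     (forall d : R, 0 < d -> exists N, forall n, (N <= n)%N ->
        forall u, u \in B n ->
          (#|nbh (et n) u :&: A n|)%:R / (#|nbh (et n) u|)%:R <= d))
  /\
  (* (b) *)
  (exists B : forall n, {set 'I_n},
     (forall n, B n \subset ~: A n) /\
     @little_o R (fun n => (#|~: (A n :|: B n)|)%:R) (fun n => (#|A n|)%:R) /\
     (forall d : R, 0 < d -> exists N, forall n, (N <= n)%N ->
        forall v, v \in B n ->
          (#|nbh (et n) v :&: A n|)%:R / (#|nbh (et n) v|)%:R <= d)).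
Proof.
move=> e_expander eps_gt0 _ et_sub et_deg A_small.
have half_deg n v : 2^-1 * (deg (e n) v)%:R <= (deg (et n) v)%:R :> R.
  by apply: le_trans (et_deg n v); rewrite ler_wpM2r // lerDl ltW.
have [f [heavy_small f_vanish]] :=
  vanishing_threshold (heavy_eventually_small e_expander et_sub half_deg A_small).
pose H n := heavy (et n) (A n) (f n).
have light_frac (d : R) : 0 < d -> exists N, forall n, (N <= n)%N ->
    forall u, u \notin H n -> nbh_frac (et n) (A n) u <= d.
  move=> d_gt0; have [N f_le] := f_vanish d d_gt0; exists N => n /f_le fn_le u.
  by rewrite inE -leNgt => /le_trans; apply.
have heavy_le (d : R) : 0 < d -> exists N, forall n, (N <= n)%N -> #|H n|%:R <= d * #|A n|%:R.
  move=> d_gt0; have [N f_le] := f_vanish d d_gt0; exists N => n /f_le fn_le.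
  by apply: le_trans (heavy_small n) _; rewrite ler_wpM2r.
split.
- exists (fun n => A n :\: H n); split; [by move=> n; exact: subsetDl | split].
  + move=> d /heavy_le[N H_le]; exists N => n /H_le; exact: card_setD_ge.
  + move=> d /light_frac[N light]; exists N => n /light light_n u /setDP[_]; exact: light_n.
- exists (fun n => ~: A n :\: H n); split; [by move=> n; exact: subsetDl | split].
  + move=> d /heavy_le[N H_le]; exists N => n /H_le; apply: le_trans.
    rewrite ler_nat; apply/subset_leq_card/subsetP => u.
    by rewrite !inE; case: (u \in A n); rewrite //= andbT negbK.
  + move=> d /light_frac[N light]; exists N => n /light light_n u /setDP[_]; exact: light_n.
Qed.
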